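(* Let $M\ge 2$ and let $0<\gamma_1<\gamma_2<\cdots<\gamma_M$ be real numbers. For $\mathbf{p}=(p_1,\dots,p_M)^T\in\mathbb{R}_{\ge 0}^M$ define $$R_{\mathrm{sum}}(\mathbf{p})=\sum_{i=1}^{M}\log_2\left[1+\frac{p_i\gamma_i}{\sum_{j=i+1}^{M}p_j\gamma_i+1}\right]$$ (an empty sum being $0$). Then $R_{\mathrm{sum}}$ is a strictly concave function of $\mathbf{p}$ on $\mathbb{R}_{\ge 0}^M$.
   Context: This is the sum-rate (over a unit-bandwidth resource block) of an $M$-user downlink power-domain NOMA cluster in which user $i$ has normalized channel power gain $\gamma_i$ (channel gain divided by noise power) and transmit power $p_i$, and successive interference cancellation is performed in ascending order of channel gains: user $i$ cancels the signals of users $1,\dots,i-1$ and treats the signals of users $i+1,\dots,M$ as interference. *)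

From mathcomp Require Import all_boot all_order all_algebra.
From mathcomp Require Import all_classical all_reals all_analysis.
Set Implicit Arguments. Unset Strict Implicit. Unset Printing Implicit Defensive.
Import Order.TTheory GRing.Theory Num.Theory.
Local Open Scope ring_scope.

Definition log2 {R : realType} (x : R) : R := ln x / ln 2.

(* NOMA sum-rate; indices 0..M-1 (paper: 1..M); the interference sum runs
   over j > i (an empty sum is 0). *)
Definition Rsum {R : realType} (M : nat) (gamma p : 'I_M -> R) : R :=
  \sum_(i < M)
    log2 (1 + p i * gamma i / (\sum_(j < M | (i < j)%N) p j * gamma i + 1)).

Definition strictly_concave_on_nonneg {R : realType} (M : nat)
  (f : ('I_M -> R) -> R) : Prop :=
  forall (p q : 'I_M -> R) (t : R),
    (forall i, 0 <= p i) -> (forall i, 0 <= q i) -> p <> q ->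
    0 < t -> t < 1 ->
    t * f p + (1 - t) * f q < f (fun i => t * p i + (1 - t) * q i).

From mathcomp Require Import all_boot all_order all_algebra.
From mathcomp Require Import all_classical all_reals all_analysis.
From mathcomp Require Import ring lra.
Import Order.TTheory GRing.Theory Num.Theory.
Local Open Scope ring_scope.

(* Write S_k = p_k + ... + p_M for the tail sums of the powers.  Since
   p_i = S_i - S_(i+1), the i-th rate is log2 (1 + gamma_i S_i) -
   log2 (1 + gamma_i S_(i+1)); regrouping the sum by S_k gives
   R_sum = sum_k log2 ((1 + gamma_k S_k) / (1 + gamma_(k-1) S_k)) with
   gamma_0 := 0.  For a > b >= 0 the map x |-> (1 + a x) / (1 + b x) is concave
   and injective on [0, oo), so its logarithm is strictly concave; as p |-> S is
   linear and injective, R_sum is strictly concave. *)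

Section Concavity.
Context {R : realType}.

Lemma concave_le_of_lt (f : R -> R) (x y t : R) :
  (x != y -> t * f x + (1 - t) * f y < f (t * x + (1 - t) * y)) ->
  t * f x + (1 - t) * f y <= f (t * x + (1 - t) * y).
Proof.
move=> f_lt; have [-> | xy] := eqVneq x y; last exact/ltW/f_lt.
by rewrite -!mulrDl subrKC !mul1r.
Qed.

Lemma sum_strict_concave {I : finType} (f : I -> R -> R) (x y : I -> R) t k :
  (forall i, x i != y i ->
     t * f i (x i) + (1 - t) * f i (y i) < f i (t * x i + (1 - t) * y i)) ->
  x k != y k ->
  t * \sum_i f i (x i) + (1 - t) * \sum_i f i (y i)
    < \sum_i f i (t * x i + (1 - t) * y i).
Proof.
move=> f_conc xyk; rewrite !mulr_sumr -big_split /=.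
rewrite (bigD1 k) //= [ltRHS](bigD1 k) //=.
apply: ltr_leD; first exact: f_conc.
by apply: ler_sum => i _; exact/concave_le_of_lt/f_conc.
Qed.

Lemma add1_mul_gt0 {c x : R} : 0 <= c -> 0 <= x -> 0 < 1 + c * x.
Proof. by move=> c0 x0; rewrite ltr_pwDl // mulr_ge0. Qed.

Lemma ln_lt_subr1 (x : R) : 0 < x -> x != 1 -> ln x < x - 1.
Proof.
move=> x_gt0 x_neq1; have /expR_gt1Dx : ln x != 0 by rewrite ln_eq0.
rewrite lnK ?posrE //; lra.
Qed.

(* A and B lie below the tangent of ln at C, strictly A since A != C. *)
Lemma ln_strict_concave (A B t : R) : 0 < A -> 0 < B -> 0 < t -> t < 1 ->
  A != B -> t * ln A + (1 - t) * ln B < ln (t * A + (1 - t) * B).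
Proof.
move=> A_gt0 B_gt0 t_gt0 t_lt1 AB; set C := t * A + (1 - t) * B.
have C_gt0 : 0 < C by rewrite /C; nra.
have AC : A / C != 1.
  by apply: contra_neq AB => /divr1_eq; rewrite /C => ?; nra.
have lnA : ln (A / C) < A / C - 1 by rewrite ln_lt_subr1 ?divr_gt0.
have lnB : ln (B / C) <= B / C - 1.
  by rewrite -{1}[B / C](subrKC 1) le_ln1Dx // ltrBrDl subrr divr_gt0.
rewrite !ln_div ?posrE // in lnA lnB.
have : t * (A / C - 1) + (1 - t) * (B / C - 1) = 0.
  by rewrite /C; field; rewrite -/C gt_eqF.
nra.
Qed.

Definition lin_frac (a b x : R) : R := (1 + a * x) / (1 + b * x).

Section LinFrac.
Variables (a b : R).
Hypotheses (ba : b < a) (b_ge0 : 0 <= b).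

Lemma lin_frac_gt0 (x : R) : 0 <= x -> 0 < lin_frac a b x.
Proof. by move=> x0; rewrite divr_gt0 ?add1_mul_gt0 // (le_trans b_ge0 (ltW ba)). Qed.

Lemma lin_frac_inj (x y : R) : 0 <= x -> 0 <= y ->
  lin_frac a b x = lin_frac a b y -> x = y.
Proof.
move=> x0 y0; have [dx dy] := (add1_mul_gt0 b_ge0 x0, add1_mul_gt0 b_ge0 y0).
move/eqP; rewrite /lin_frac eqr_div ?(gt_eqF dx) ?(gt_eqF dy) // => /eqP E.
have : (a - b) * (x - y) = 0 by lra.
by move/eqP; rewrite mulf_eq0 !subr_eq0 gt_eqF //= => /eqP.
Qed.

(* The concavity defect is t (1 - t) (a - b) b (x - y)^2 over the denominators. *)
Lemma lin_frac_concave (x y t : R) : 0 <= x -> 0 <= y -> 0 < t -> t < 1 ->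
  t * lin_frac a b x + (1 - t) * lin_frac a b y
    <= lin_frac a b (t * x + (1 - t) * y).
Proof.
move=> x0 y0 t0 t1; set z := t * x + (1 - t) * y.
have z0 : 0 <= z by rewrite /z; nra.
have [[dx dy] dz] := (add1_mul_gt0 b_ge0 x0, add1_mul_gt0 b_ge0 y0, add1_mul_gt0 b_ge0 z0).
rewrite -subr_ge0 /lin_frac.
have -> : (1 + a * z) / (1 + b * z)
   - (t * ((1 + a * x) / (1 + b * x)) + (1 - t) * ((1 + a * y) / (1 + b * y)))
   = t * (1 - t) * (a - b) * b * (x - y) ^+ 2
     / ((1 + b * x) * (1 + b * y) * (1 + b * z)).
  by rewrite /z; field; rewrite -/z !gt_eqF.
apply: divr_ge0; last by rewrite !mulr_ge0 ?ltW.
by rewrite mulr_ge0 ?sqr_ge0 // !mulr_ge0 ?subr_ge0 //; apply: ltW.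
Qed.

Lemma ln_lin_frac_strict_concave (x y t : R) : 0 <= x -> 0 <= y -> 0 < t -> t < 1 ->
  x != y ->
  t * ln (lin_frac a b x) + (1 - t) * ln (lin_frac a b y)
    < ln (lin_frac a b (t * x + (1 - t) * y)).
Proof.
move=> x0 y0 t0 t1 xy.
have ux : 0 < lin_frac a b x by exact: lin_frac_gt0.
have uy : 0 < lin_frac a b y by exact: lin_frac_gt0.
have z0 : 0 <= t * x + (1 - t) * y by nra.
have uxy : lin_frac a b x != lin_frac a b y.
  by apply: contra_neq xy; exact: lin_frac_inj.
apply: lt_le_trans (ln_strict_concave _ _ _ ux uy t0 t1 uxy) _.
have comb_gt0 : 0 < t * lin_frac a b x + (1 - t) * lin_frac a b y.
  by apply: addr_gt0; apply: mulr_gt0; rewrite ?subr_gt0.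
by rewrite ler_ln ?posrE ?lin_frac_gt0 ?lin_frac_concave.
Qed.

End LinFrac.
End Concavity.

Section TailSums.
Context {R : realType} {M : nat}.
Implicit Types (p q : 'I_M -> R).

Definition tail_sum p (k : nat) : R := \sum_(j < M | (k <= j)%N) p j.

Lemma tail_sumS p (i : 'I_M) : tail_sum p i = p i + tail_sum p i.+1.
Proof.
rewrite /tail_sum (bigD1 i) //=; congr (_ + _); apply: eq_bigl => j.
by rewrite [(i < j)%N]ltn_neqAle andbC eq_sym.
Qed.

Lemma tail_sum_out p k : (M <= k)%N -> tail_sum p k = 0.
Proof.
by move=> Mk; rewrite /tail_sum big_pred0 // => j; rewrite leqNgt (leq_trans _ Mk).
Qed.

Lemma tail_sum_ge0 p k : (forall i, 0 <= p i) -> 0 <= tail_sum p k.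
Proof. by move=> p0; apply: sumr_ge0. Qed.

Lemma tail_sum_conv p q t k :
  tail_sum (fun i => t * p i + (1 - t) * q i) k
    = t * tail_sum p k + (1 - t) * tail_sum q k.
Proof. by rewrite /tail_sum big_split /= -!mulr_sumr. Qed.

Lemma tail_sum_inj p q : (forall k : 'I_M, tail_sum p k = tail_sum q k) -> p = q.
Proof.
move=> Epq; have {}Epq k : tail_sum p k = tail_sum q k.
  have [kM | /tail_sum_out Mk] := ltnP k M; last by rewrite !Mk.
  exact: (Epq (Ordinal kM)).
apply: funext => i; apply: (addIr (tail_sum p i.+1)).
by rewrite -tail_sumS Epq tail_sumS Epq.
Qed.

End TailSums.

Section SumRate.
Context {R : realType} {n : nat}.
Variable gamma : 'I_n.+1 -> R.
Hypothesis gamma_gt0 : forall i, 0 < gamma i.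
Implicit Types p : 'I_n.+1 -> R.

Definition prev_gain (k : 'I_n.+1) : R :=
  if val k is j.+1 then gamma (inord j) else 0.

Lemma prev_gain_ge0 k : 0 <= prev_gain k.
Proof. by rewrite /prev_gain; case: (val k) => // j; exact/ltW. Qed.

Lemma rate_tail_sum p (i : 'I_n.+1) : (forall i, 0 <= p i) ->
  ln (1 + p i * gamma i / (\sum_(j < n.+1 | (i < j)%N) p j * gamma i + 1))
    = ln (1 + gamma i * tail_sum p i) - ln (1 + gamma i * tail_sum p i.+1).
Proof.
move=> p0; rewrite -mulr_suml -/(tail_sum p i.+1) (tail_sumS p i).
have S_ge0 := tail_sum_ge0 p i.+1 p0; have g_ge0 := ltW (gamma_gt0 i).
have den_gt0 : 0 < 1 + gamma i * tail_sum p i.+1 by exact: add1_mul_gt0.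
rewrite -ln_div ?posrE ?add1_mul_gt0 ?addr_ge0 //.
by congr ln; field; rewrite gt_eqF.
Qed.

Lemma sum_ln_shift p :
  \sum_(i < n.+1) ln (1 + gamma i * tail_sum p i.+1)
    = \sum_(k < n.+1) ln (1 + prev_gain k * tail_sum p k).
Proof.
rewrite big_ord_recr big_ord_recl /= tail_sum_out // mulr0 mul0r addr0 ln1.
rewrite addr0 add0r; apply: eq_bigr => i _; congr (ln (1 + gamma _ * _)).
by apply: val_inj; rewrite /= inordK // ltnS ltnW.
Qed.

Lemma Rsum_tail_sum p : (forall i, 0 <= p i) ->
  Rsum gamma p
    = (\sum_(k < n.+1) ln (lin_frac (gamma k) (prev_gain k) (tail_sum p k))) / ln 2.
Proof.
move=> p0; rewrite /Rsum /log2 -mulr_suml; congr (_ / _).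
rewrite (eq_bigr _ (fun i _ => rate_tail_sum p i p0)) sumrB sum_ln_shift -sumrB.
apply: eq_bigr => k _; have Sk := tail_sum_ge0 p k p0.
by rewrite ln_div // posrE add1_mul_gt0 ?prev_gain_ge0 // ltW.
Qed.

Hypothesis gamma_incr : forall i j : 'I_n.+1, (i < j)%N -> gamma i < gamma j.

Lemma prev_gain_lt k : prev_gain k < gamma k.
Proof.
rewrite /prev_gain; case: k => [[|j] jn] //=; apply: gamma_incr.
by rewrite /= inordK // ltnW.
Qed.

End SumRate.

Theorem lemma1 (R : realType) (M : nat) (gamma : 'I_M -> R) :
  (2 <= M)%N ->
  (forall i, 0 < gamma i) ->
  (forall i j : 'I_M, (i < j)%N -> gamma i < gamma j) ->
  strictly_concave_on_nonneg (Rsum gamma).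
Proof.
case: M gamma => [//|n] gamma _ gamma_gt0 gamma_incr p q t p0 q0 pq t0 t1.
have r0 i : 0 <= t * p i + (1 - t) * q i by have := p0 i; have := q0 i; nra.
have /existsP [k pqk] : [exists k : 'I_n.+1, tail_sum p k != tail_sum q k].
  rewrite -negb_forall; apply/negP => /forallP Epq.
  by apply: pq; apply: tail_sum_inj => k; apply/eqP.
rewrite !Rsum_tail_sum // !mulrA -mulrDl ltr_pM2r ?invr_gt0 ?ln_gt0 ?ltr1n //.
under [ltRHS]eq_bigr do rewrite tail_sum_conv.
pose f k x := ln (lin_frac (gamma k) (prev_gain gamma k) x).
apply: (sum_strict_concave f) pqk => i.
apply: ln_lin_frac_strict_concave; rewrite ?tail_sum_ge0 //.
  by apply: prev_gain_lt.
by apply: prev_gain_ge0.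
Qed.
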